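(* Let $k \geq 3$ be an integer and let $n$ be a $k$-admissible integer such that $n \in \{2k,2k+1\}$. Any non-reducible partial $k$-star design of order $n$ with $u(n,k)$ stars is completable.
   Context: A $k$-star is a copy of $K_{1,k}$; its vertex of degree $k$ is the centre and the others are leaves. A partial $k$-star design of order $n$ is a pair $(V,\mathcal{A})$ where $V$ is a set of $n$ vertices and $\mathcal{A}$ is a set of edge-disjoint $k$-stars that are subgraphs of the complete graph $K_V$; it is completable if there is a set $\mathcal{B}\supseteq\mathcal{A}$ of edge-disjoint $k$-stars in $K_V$ covering all edges of $K_V$. A positive integer $n$ is $k$-admissible if $\binom{n}{2}\equiv 0 \pmod{k}$. Here \[u(n,k)= \begin{cases} 2 \lfloor \frac{n-2}{k} \rfloor-1 & \text{if $n \not \equiv 1\pmod{k}$},\\ \frac{2(n-1)}{k} - 2 & \text{if $n \equiv 1\pmod{k}$.} \end{cases} \] A partial $k$-star design $(V,\mathcal{A})$ of order $n$ is reducible if $n \equiv 1 \pmod{k}$, $|\mathcal{A}|=u(n,k)$, and there is a vertex which is the centre of at least one star in $\mathcal{A}$ and is not a leaf of any star in $\mathcal{A}$; otherwise it is non-reducible. *)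

From mathcomp Require Import all_boot.
Set Implicit Arguments. Unset Strict Implicit. Unset Printing Implicit Defensive.

(* Vertex set V = 'I_n (order n).  Edges of K_V are 2-element sets [set x; y], x != y.
   A star is encoded as (centre, leaf set). *)
Definition star (n : nat) := ('I_n * {set 'I_n})%type.

Definition is_kstar (n k : nat) (s : star n) : bool :=
  (s.1 \notin s.2) && (#|s.2| == k).

Definition star_edges (n : nat) (s : star n) : {set {set 'I_n}} :=
  [set [set s.1; l] | l in s.2].

Definition edge_disjoint (n : nat) (A : {set star n}) : Prop :=
  forall s t, s \in A -> t \in A -> s != t ->
    [disjoint star_edges s & star_edges t].

Definition partial_design (n k : nat) (A : {set star n}) : Prop :=
  (forall s, s \in A -> is_kstar k s) /\ edge_disjoint A.

Definition completable (n k : nat) (A : {set star n}) : Prop :=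
  exists B : {set star n},
    [/\ A \subset B, partial_design k B &
        forall x y : 'I_n, x != y ->
          exists2 s, s \in B & [set x; y] \in star_edges s].

Definition admissible (n k : nat) : bool := 'C(n, 2) %% k == 0.

Definition u (n k : nat) : nat :=
  if n %% k == 1 then (2 * (n - 1)) %/ k - 2
  else 2 * ((n - 2) %/ k) - 1.

Definition reducible (n k : nat) (A : {set star n}) : Prop :=
  [/\ n %% k = 1, #|A| = u n k &
      exists v : 'I_n,
        (exists2 s, s \in A & s.1 = v) /\ (forall s, s \in A -> v \notin s.2)].

(* For n = 2k + 1 we have u(n, k) = 2, and a partial design with two stars is
   always reducible: the two centres cannot each be a leaf of the other star,
   since the edge joining them would then lie in both stars.  For n = 2k we have
   u(n, k) = 1.  The round-robin decomposition of K_2k, on Z_(2k-1) plus a point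
   at infinity, gives each w in Z_(2k-1) the star with leaves infinity and
   w + 1, ..., w + k - 1; it orients every edge exactly once.  All k-stars are
   conjugate under permutations of the vertices, and relabelling the round-robin
   decomposition carries one of its stars onto the given one. *)

From mathcomp Require Import all_boot fingroup perm zify.

Set Implicit Arguments.
Unset Strict Implicit.
Unset Printing Implicit Defensive.

Definition star_decomposition (n k : nat) (B : {set star n}) : Prop :=
  partial_design k B /\
  forall x y : 'I_n, x != y -> exists2 s, s \in B & [set x; y] \in star_edges s.

Definition star_map (n : nat) (f : 'I_n -> 'I_n) (s : star n) : star n :=
  (f s.1, f @: s.2).

Lemma star_edges_map (n : nat) (f : 'I_n -> 'I_n) (s : star n) :
  star_edges (star_map f s) = [set f @: e | e : {set 'I_n} in star_edges s].
Proof.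
rewrite /star_edges -!imset_comp; apply: eq_imset => l.
by rewrite /= imsetU1 imset_set1.
Qed.

Lemma star_decomposition_perm (n k : nat) (p : {perm 'I_n}) (B : {set star n}) :
  star_decomposition k B -> star_decomposition k (star_map p @: B).
Proof.
case=> -[kB disB] covB; split; first split.
- move=> _ /imsetP[s sB ->]; have /andP[cNL /eqP <-] := kB s sB.
  rewrite /is_kstar /star_map /= (mem_imset _ _ perm_inj) cNL.
  by rewrite (card_imset _ perm_inj) eqxx.
- move=> _ _ /imsetP[s sB ->] /imsetP[t tB ->] st.
  rewrite !star_edges_map imset_disjoint; last exact/imset_inj/perm_inj.
  by apply: disB => //; apply: contraNneq st => ->.
- move=> x y xy.
  have /covB[s sB xy_s] : (p^-1)%g x != (p^-1)%g y by rewrite (inj_eq perm_inj).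
  exists (star_map p s); first exact: imset_f.
  rewrite star_edges_map; apply/imsetP.
  exists [set (p^-1)%g x; (p^-1)%g y] => //.
  by rewrite imsetU1 imset_set1 !permKV.
Qed.

(* Induction step: compose with the transposition moving [p x] to [y], which
   fixes the images of [s]. *)
Lemma perm_map_uniq (T : finType) (s t : seq T) :
  uniq s -> uniq t -> size s = size t -> exists p : {perm T}, map p s = t.
Proof.
elim: s t => [|x s IHs] [|y t] //=; first by exists 1%g.
move=> /andP[xNs Us] /andP[yNt Ut] [Est].
have [p Ep] := IHs t Us Ut Est.
exists (p * tperm (p x) y)%g.
rewrite /= permM tpermL -[in RHS]Ep; congr (_ :: _).
apply/eq_in_map => z zs; rewrite permM tpermD //.
  by rewrite (inj_eq perm_inj); apply: contraNneq xNs => ->.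
by apply: contraNneq yNt => ->; rewrite -Ep map_f.
Qed.

Lemma kstar_perm (n k : nat) (s t : star n) :
  is_kstar k s -> is_kstar k t -> exists p : {perm 'I_n}, star_map p s = t.
Proof.
case: s t => [c L] [d M] /andP[/= cNL /eqP L_k] /andP[/= dNM /eqP M_k].
have [|||p [pc pL]] := @perm_map_uniq _ (c :: enum L) (d :: enum M).
- by rewrite /= mem_enum cNL enum_uniq.
- by rewrite /= mem_enum dNM enum_uniq.
- by rewrite /= -!cardE L_k M_k.
exists p; rewrite /star_map /= pc; congr pair; apply/setP => y.
rewrite -[y](permKV p) (mem_imset _ _ perm_inj) -[in RHS]mem_enum -pL.
by rewrite (mem_map perm_inj) mem_enum.
Qed.

Lemma orientation_star_decomposition (n k : nat) (C : {set 'I_n})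
    (N : 'I_n -> {set 'I_n}) :
  {in C, forall w, is_kstar k (w, N w)} ->
  (forall x y, x != y ->
     (x \in C) && (y \in N x) (+) (y \in C) && (x \in N y)) ->
  star_decomposition k [set (w, N w) | w in C].
Proof.
move=> kN orient; split; first split.
- by move=> _ /imsetP[w wC ->]; apply: kN.
- move=> _ _ /imsetP[a aC ->] /imsetP[b bC ->] ab.
  have {}ab : a != b by apply: contraNneq ab => ->.
  apply/pred0P => e /=; apply/negbTE/andP.
  move=> -[/imsetP[y yNa ->] /imsetP[x xNb yx]].
  have /set2P[/eqP|ay] : a \in [set b; x] by rewrite -yx set21.
    by rewrite (negbTE ab).
  have /set2P[ba|by_] : b \in [set a; y] by rewrite yx set21.
    by rewrite ba eqxx in ab.
  rewrite -by_ in yNa; rewrite -ay in xNb.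
  by move: (orient a b ab); rewrite aC bC yNa xNb.
- move=> x y xy; have /addbP := orient x y xy.
  case: ((x \in C) && (y \in N x)) / andP.
    move=> [xC yNx] _; exists (x, N x); rewrite ?imset_f //.
    by apply/imsetP; exists y.
  move=> _ /esym/andP[yC xNy].
  exists (y, N y); rewrite ?imset_f //.
  by apply/imsetP; exists x; rewrite // setUC.
Qed.

Section RoundRobin.

Variables k m : nat.
Hypothesis m_k : m.+1 = 2 * k.

(* Vertex [m] is the point at infinity; [forward_dist a b] is b - a in Z_m for
   a, b < m. *)
Definition forward_dist (a b : nat) : nat :=
  if a <= b then b - a else b + m - a.

Definition rr_leaves (w : 'I_m.+1) : {set 'I_m.+1} :=
  [set v | (v == ord_max) || (0 < forward_dist w v < k)].

Definition rr_design : {set star m.+1} :=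
  [set (w, rr_leaves w) | w in [set w : 'I_m.+1 | w < m]].

Lemma rr_orientation (x y : 'I_m.+1) : x != y ->
  (x \in [set w : 'I_m.+1 | w < m]) && (y \in rr_leaves x)
  (+) (y \in [set w : 'I_m.+1 | w < m]) && (x \in rr_leaves y).
Proof.
rewrite !inE -!(inj_eq (@ord_inj _)) /= /forward_dist.
by have := ltn_ord x; have := ltn_ord y; case: ifP; case: ifP; lia.
Qed.

Lemma rr_leaves_card (w : 'I_m.+1) : w < m -> #|rr_leaves w| = k.
Proof.
move=> wm.
pose shift d := if w + d < m then w + d else w + d - m.
have shift_lt d : d < m -> shift d < m by rewrite /shift; case: ifP; lia.
have dist_shift d : 0 < d < m -> forward_dist w (shift d) = d.
  by rewrite /shift /forward_dist; case: (ltnP (w + d) m) => /=; case: ifP; lia.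
have shift_dist v : v < m -> shift (forward_dist w v) = v.
  by rewrite /shift /forward_dist; case: (leqP w v) => /=; case: ifP; lia.
pose vertex d : 'I_m.+1 := inord (shift d.+1).
have val_vertex (j : 'I_k.-1) : vertex j = shift j.+1 :> nat.
  by rewrite /vertex inordK // ltnS ltnW // shift_lt //; case: j => /=; lia.
have -> : rr_leaves w = ord_max |: [set vertex j | j : 'I_k.-1].
  apply/setP => v; rewrite !inE -(inj_eq (@ord_inj _)) /=.
  have [//|vNm] := eqVneq (v : nat) m.
  have vm : v < m by have := ltn_ord v; lia.
  apply/idP/imsetP => [dv | [j _ ->]].
    have jk : (forward_dist w v).-1 < k.-1 by lia.
    exists (Ordinal jk) => //; apply: ord_inj.
    by rewrite val_vertex /= prednK ?shift_dist //; lia.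
  by rewrite val_vertex dist_shift //; case: j => /=; lia.
have j_lt (j : 'I_k.-1) : 0 < j.+1 < m by case: j => /=; lia.
rewrite cardsU1 card_imset ?card_ord.
  have /negPf-> // : ord_max \notin [set vertex j | j : 'I_k.-1].
    apply/imsetP => -[j _ /(congr1 (@nat_of_ord _))] /=; rewrite val_vertex.
    by have := shift_lt j.+1; have := j_lt j; lia.
  by rewrite /=; lia.
move=> i j /(congr1 (forward_dist w \o @nat_of_ord _)) /=.
by rewrite !val_vertex !dist_shift // => -[/ord_inj].
Qed.

Lemma rr_kstar (w : 'I_m.+1) : w < m -> is_kstar k (w, rr_leaves w).
Proof.
move=> wm; rewrite /is_kstar rr_leaves_card // eqxx andbT /= inE.
by rewrite -(inj_eq (@ord_inj _)) /= /forward_dist leqnn subnn; lia.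
Qed.

Lemma rr_star_decomposition : star_decomposition k rr_design.
Proof.
apply: orientation_star_decomposition => [w | x y]; last exact: rr_orientation.
by rewrite inE; apply: rr_kstar.
Qed.
End RoundRobin.

Lemma kstar_in_star_decomposition (n k : nat) (s : star n) :
  n = 2 * k -> is_kstar k s ->
  exists2 B : {set star n}, s \in B & star_decomposition k B.
Proof.
case: n s => [|m] s n_k ks; first by case: s.1.
have m_gt0 : 0 < m by lia.
have [p <-] := kstar_perm (@rr_kstar _ _ n_k ord0 m_gt0) ks.
exists (star_map p @: rr_design k m).
  by apply/imset_f/imset_f; rewrite inE.
exact/star_decomposition_perm/rr_star_decomposition.
Qed.

Lemma two_star_design_free_centre (n k : nat) (A : {set star n}) :
  partial_design k A -> #|A| = 2 ->
  exists v,
    (exists2 s, s \in A & s.1 = v) /\ (forall s, s \in A -> v \notin s.2).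
Proof.
move=> [kA disA] /eqP/cards2P[s1 [s2 [s12 A_s]]].
have centreNleaf s : s \in A -> s.1 \notin s.2 by case/kA/andP.
have s1A : s1 \in A by rewrite A_s set21.
have s2A : s2 \in A by rewrite A_s set22.
have [s1_s2 | s1Ns2] := boolP (s1.1 \in s2.2); last first.
  exists s1.1; split; first by exists s1.
  by move=> s; rewrite A_s => /set2P[] ->; first exact: centreNleaf.
exists s2.1; split; first by exists s2.
move=> s; rewrite A_s => /set2P[] ->; last exact: centreNleaf.
apply: contraTN (disA s1 s2 s1A s2A s12) => s2_s1; apply/pred0Pn.
exists [set s1.1; s2.1]; apply/andP; split; apply/imsetP; first by exists s2.1.
by exists s1.1; rewrite // setUC.
Qed.

Lemma u_double (k : nat) : 1 < k -> u (2 * k) k = 1.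
Proof.
move=> k_gt1; rewrite /u modnMl /=.
have -> : 2 * k - 2 = 1 * k + (k - 2) by lia.
by rewrite divnMDl ?divn_small; lia.
Qed.

Lemma modn_double_succ (k : nat) : 1 < k -> (2 * k + 1) %% k = 1.
Proof. by move=> k_gt1; rewrite modnMDl modn_small. Qed.

Lemma u_double_succ (k : nat) : 1 < k -> u (2 * k + 1) k = 2.
Proof.
move=> k_gt1; rewrite /u modn_double_succ //=.
have -> : 2 * (2 * k + 1 - 1) = 4 * k by lia.
by rewrite mulnK //; lia.
Qed.

Theorem lemma9 (k n : nat) (A : {set star n}) :
  3 <= k -> admissible n k -> (n = 2 * k \/ n = 2 * k + 1) ->
  partial_design k A -> #|A| = u n k -> ~ reducible k A ->
  completable k A.
Proof.
move=> k_ge3 _ [n_k | n_k] designA A_u A_irred; subst n.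
  move: A_u; rewrite u_double; last lia.
  move/eqP/cards1P => [s A_s].
  have ks : is_kstar k s by apply: designA.1; rewrite A_s set11.
  have [B sB [designB coverB]] := kstar_in_star_decomposition erefl ks.
  by exists B; split; rewrite // A_s sub1set.
have A_2 : #|A| = 2 by rewrite A_u u_double_succ //; lia.
case: A_irred; split; first by rewrite modn_double_succ //; lia.
  by rewrite A_u.
exact: two_star_design_free_centre designA A_2.
Qed.
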